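(* Let $\varepsilon\in(0,1]$. There exists a test $T:\Delta_{BD}\to\Sigma_1$ such that (i) $P(T(P))\le\varepsilon$ for every $P\in\Delta_{BD}$, and (ii) $T$ is nonmanipulable: for every probability measure $\zeta$ on $\Delta_{BD}$ with finite support there is a cylinder $C_\zeta$ such that $\zeta(\{P\in\Delta_{BD}:\omega\notin T(P)\})=0$ for every $\omega\in C_\zeta$.
   Context: Let $\Omega=\{0,1\}^{\mathbb N}$ (paths) with the product topology; for $\omega\in\Omega$, $t\ge0$, $\omega^t$ is the cylinder of paths agreeing with $\omega$ in the first $t$ coordinates. $\Sigma$ is a fixed $\sigma$-algebra on $\Omega$ containing all cylinders; $\Sigma_1$ is the family of open subsets of $\Omega$. $\mathbb P$ is the set of finitely additive probabilities on $(\Omega,\Sigma)$. $P\in\mathbb P$ is strongly nonatomic (an ''opinion'') if for every $E\in\Sigma$ and $\alpha\in[0,1]$ there is $F\in\Sigma$, $F\subseteq E$, with $P(F)=\alpha P(E)$. For $R\in\mathbb P$ and a cylinder with $R(\omega^t)>0$, $R(E\mid\omega^t)=R(E\cap\omega^t)/R(\omega^t)$. $P$ merges with $Q$ ($P,Q\in\mathbb P$) if for every $\varepsilon>0$, $Q(\{\omega:\sup_{E\in\Sigma}|P(E\mid\omega^t)-Q(E\mid\omega^t)|>\varepsilon\})\to0$ as $t\to\infty$ (cylinders with $Q(\omega^t)>0=P(\omega^t)$ counted in the set). $Q\ll P$ means: for every sequence $(E_n)$ in $\Sigma$, $P(E_n)\to0$ implies $Q(E_n)\to0$. $P\in\mathbb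 P$ has the Blackwell–Dubins property if $P$ merges with every $Q\in\mathbb P$ satisfying $Q\ll P$. $\Delta_{BD}$ is the set of strongly nonatomic $P\in\mathbb P$ having the Blackwell–Dubins property. *)

From Stdlib Require Import Reals Lra List Classical ClassicalEpsilon.
Open Scope R_scope.

Definition Omega := nat -> bool.
Definition event := Omega -> Prop.

Definition cyl (w : Omega) (t : nat) : event := fun w' => forall i, (i < t)%nat -> w' i = w i.

Definition inter (E F : event) : event := fun w => E w /\ F w.
Definition union (E F : event) : event := fun w => E w \/ F w.
Definition compl (E : event) : event := fun w => ~ E w.
Definition full : event := fun _ => True.

Definition is_sigma_algebra (S : event -> Prop) : Prop :=
  S full /\ (forall E, S E -> S (compl E)) /\
  (forall En : nat -> event, (forall n, S (En n)) -> S (fun w => exists n, En n w)).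
Definition contains_cylinders (S : event -> Prop) : Prop := forall w t, S (cyl w t).

(* open sets of the product topology *)
Definition is_open (U : event) : Prop := forall w, U w -> exists t, forall w', cyl w t w' -> U w'.

(* finitely additive probabilities on (Omega, Sigma); values off Sigma irrelevant *)
Definition fa_prob (S : event -> Prop) (P : event -> R) : Prop :=
  (forall E, S E -> 0 <= P E) /\ P full = 1 /\
  (forall E F, S E -> S F -> (forall w, E w -> F w -> False) -> P (union E F) = P E + P F).

Definition strongly_nonatomic (S : event -> Prop) (P : event -> R) : Prop :=
  forall E a, S E -> 0 <= a <= 1 ->
    exists F, S F /\ (forall w, F w -> E w) /\ P F = a * P E.

Definition cond (R0 : event -> R) (E : event) (w : Omega) (t : nat) : R :=
  R0 (inter E (cyl w t)) / R0 (cyl w t).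

(* the set of paths at which P and Q are eps-far at time t (cylinders with Q>0=P counted) *)
Definition bad_set (S : event -> Prop) (P Q : event -> R) (eps : R) (t : nat) : event :=
  fun w => 0 < Q (cyl w t) /\
    (P (cyl w t) = 0 \/
     (0 < P (cyl w t) /\ exists E, S E /\ Rabs (cond P E w t - cond Q E w t) > eps)).

(* "sup_E |...| > eps" is equivalent to the existence of such an E *)
Definition merges (S : event -> Prop) (P Q : event -> R) : Prop :=
  forall eps, eps > 0 -> Un_cv (fun t => Q (bad_set S P Q eps t)) 0.

Definition abs_cont (S : event -> Prop) (Q P : event -> R) : Prop :=
  forall En : nat -> event, (forall n, S (En n)) ->
    Un_cv (fun n => P (En n)) 0 -> Un_cv (fun n => Q (En n)) 0.

Definition blackwell_dubins (S : event -> Prop) (P : event -> R) : Prop :=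
  forall Q, fa_prob S Q -> abs_cont S Q P -> merges S P Q.

Definition Delta_BD (S : event -> Prop) (P : event -> R) : Prop :=
  fa_prob S P /\ strongly_nonatomic S P /\ blackwell_dubins S P.

(* A probability measure on Delta_BD with finite support, given as a list of
   atoms (P_i, w_i) with P_i in Delta_BD, w_i > 0, sum w_i = 1. *)
Definition fin_supp_prob (S : event -> Prop) (z : list ((event -> R) * R)) : Prop :=
  (forall p, In p z -> Delta_BD S (fst p) /\ 0 < snd p) /\
  fold_right (fun p acc => snd p + acc) 0 z = 1.

Definition zeta_meas (z : list ((event -> R) * R)) (A : (event -> R) -> Prop) : R :=
  fold_right (fun p acc =>
    (if excluded_middle_informative (A (fst p)) then snd p else 0) + acc) 0 z.

(* An opinion P in Delta_BD gives vanishing mass to the cylinders w^t along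
   any fixed path w.  Otherwise let c > 0 be the infimum of P(w^t), pick t
   with P(w^t) < 4c/3 and, by strong nonatomicity, split w^t into two halves
   F and w^t \ F; for s >= t both halves keep mass >= c/3 inside w^s.  The
   conditional Q = P(. | F) is absolutely continuous w.r.t. P, so P merges
   with Q; yet on w^s the event F has Q-conditional probability 1 and
   P-conditional probability at most 1 - c/3, so w^s lies in the bad set of
   every time s >= t while Q(w^s) >= c/3, contradicting merging.
   The test T(P) is then a deep enough cylinder around one fixed path, and a
   finitely supported zeta is defeated by the deepest of these cylinders. *)
From Stdlib Require Import Reals List Lra Lia Classical ClassicalEpsilon
  FunctionalExtensionality PropExtensionality.
Open Scope R_scope.

Lemma event_ext (E F : event) : (forall w, E w <-> F w) -> E = F.
Proof.
  intros H; apply functional_extensionality; intro w.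
  apply propositional_extensionality, H.
Qed.

Lemma cyl_le w s t : (t <= s)%nat -> forall w', cyl w s w' -> cyl w t w'.
Proof. intros Hts w' H i Hi; apply H; lia. Qed.

Lemma cyl_eq w w' s : cyl w s w' -> cyl w s = cyl w' s.
Proof.
  intros H; apply event_ext; intro x; unfold cyl in *; split; intros Hx i Hi;
    rewrite Hx by auto; [symmetry|]; rewrite H by auto; auto.
Qed.

Lemma cyl_open w t : is_open (cyl w t).
Proof.
  intros w' Hw'; exists t; intros w'' Hw'' i Hi.
  rewrite Hw'' by auto; apply Hw'; auto.
Qed.

Definition determined (s : nat) (B : event) : Prop :=
  forall w w', cyl w s w' -> B w -> B w'.

Definition path_of_nat (n : nat) : Omega := fun i => Nat.testbit n i.

Lemma path_of_nat_prefix_surj s (w : Omega) :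
  exists n, forall i, (i < s)%nat -> path_of_nat n i = w i.
Proof.
  revert w; induction s as [|s IHs]; intros w.
  - exists 0%nat; intros; lia.
  - destruct (IHs (fun i => w (S i))) as [n Hn].
    exists (2 * n + Nat.b2n (w 0%nat))%nat; intros [|i] Hi; unfold path_of_nat.
    + destruct (w 0%nat); simpl Nat.b2n.
      * apply Nat.testbit_odd_0.
      * rewrite Nat.add_0_r; apply Nat.testbit_even_0.
    + destruct (w 0%nat); simpl Nat.b2n.
      * rewrite Nat.testbit_odd_succ by lia; apply Hn; lia.
      * rewrite Nat.add_0_r, Nat.testbit_even_succ by lia; apply Hn; lia.
Qed.

Section SigmaAlgebra.
Variable Sg : event -> Prop.
Hypothesis HS : is_sigma_algebra Sg.

Lemma sigma_full : Sg full.
Proof. apply HS. Qed.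

Lemma sigma_compl E : Sg E -> Sg (compl E).
Proof. apply HS. Qed.

Lemma sigma_empty : Sg (fun _ => False).
Proof.
  replace (fun _ : Omega => False) with (compl full)
    by (apply event_ext; unfold compl, full; tauto).
  apply sigma_compl, sigma_full.
Qed.

Lemma sigma_union E F : Sg E -> Sg F -> Sg (union E F).
Proof.
  intros HE HF; destruct HS as [_ [_ Hu]].
  set (En := fun n : nat => match n with 0%nat => E | _ => F end).
  replace (union E F) with (fun w => exists n, En n w).
  - apply Hu; intros [|n]; assumption.
  - apply event_ext; intro w; unfold union; split.
    + intros [[|n] H]; [left|right]; exact H.
    + intros [H|H]; [exists 0%nat | exists 1%nat]; exact H.
Qed.

Lemma sigma_inter E F : Sg E -> Sg F -> Sg (inter E F).
Proof.
  intros HE HF.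
  replace (inter E F) with (compl (union (compl E) (compl F))).
  - apply sigma_compl, sigma_union; apply sigma_compl; assumption.
  - apply event_ext; intro w; unfold compl, union, inter; split.
    + intros H; split; apply NNPP; intro; apply H; auto.
    + intros [a b] [c|c]; auto.
Qed.

Hypothesis HC : contains_cylinders Sg.

(* A set determined by the first s coordinates is the countable union of
   the cylinders of depth s it contains, enumerated through [path_of_nat]. *)
Lemma sigma_determined s B : determined s B -> Sg B.
Proof.
  intros HB; destruct HS as [_ [_ Hu]].
  set (En := fun n w => B (path_of_nat n) /\ cyl (path_of_nat n) s w).
  replace B with (fun w => exists n, En n w).
  - apply Hu; intro n.
    destruct (classic (B (path_of_nat n))) as [Hb|Hb].
    + replace (En n) with (cyl (path_of_nat n) s)
        by (apply event_ext; unfold En; tauto).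
      apply HC.
    + replace (En n) with (fun _ : Omega => False)
        by (apply event_ext; unfold En; tauto).
      apply sigma_empty.
  - apply event_ext; intro w; unfold En; split.
    + intros [n [H1 H2]]; exact (HB _ _ H2 H1).
    + intros Hw; destruct (path_of_nat_prefix_surj s w) as [n Hn].
      exists n; split.
      * apply (HB w); [intros i Hi; apply Hn | ]; auto.
      * intros i Hi; symmetry; apply Hn; auto.
Qed.

End SigmaAlgebra.

Section FinitelyAdditive.
Variable Sg : event -> Prop.
Hypothesis HS : is_sigma_algebra Sg.
Variable P : event -> R.
Hypothesis HP : fa_prob Sg P.

Lemma prob_ge0 E : Sg E -> 0 <= P E.
Proof. apply HP. Qed.

Lemma prob_split E F :
  Sg E -> Sg F -> P E = P (inter E F) + P (inter E (compl F)).
Proof.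
  intros HE HF; destruct HP as [_ [_ Hadd]].
  replace E with (union (inter E F) (inter E (compl F))) at 1.
  - apply Hadd.
    + apply sigma_inter; auto.
    + apply sigma_inter, sigma_compl; auto.
    + unfold inter, compl; tauto.
  - apply event_ext; intro w; unfold union, inter, compl; split.
    + intros [[a _]|[a _]]; auto.
    + intros a; destruct (classic (F w)); auto.
Qed.

Lemma prob_mono X Y : Sg X -> Sg Y -> (forall w, Y w -> X w) -> P Y <= P X.
Proof.
  intros HX HY Hsub; rewrite (prob_split X Y HX HY).
  replace (inter X Y) with Y by (apply event_ext; unfold inter; firstorder).
  pose proof (prob_ge0 _ (sigma_inter _ HS _ _ HX (sigma_compl _ HS _ HY))).
  lra.
Qed.

Lemma prob_le1 E : Sg E -> P E <= 1.
Proof.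
  intros HE; destruct HP as [_ [H1 _]]; rewrite <- H1.
  apply prob_mono; auto; [apply sigma_full | unfold full]; auto.
Qed.

End FinitelyAdditive.

Lemma div_ge_self a b : 0 <= a -> 0 < b <= 1 -> a <= a / b.
Proof.
  intros Ha Hb; unfold Rdiv; rewrite <- (Rmult_1_r a) at 1.
  apply Rmult_le_compat_l; [lra|].
  rewrite <- Rinv_1; apply Rinv_le_contravar; lra.
Qed.

Section Conditioning.
Variable Sg : event -> Prop.
Hypothesis HS : is_sigma_algebra Sg.
Variable P : event -> R.
Hypothesis HP : fa_prob Sg P.
Variable F : event.
Hypothesis HF : Sg F.
Hypothesis HPF : 0 < P F.

Definition prob_given : event -> R := fun E => P (inter E F) / P F.

Lemma prob_given_fa_prob : fa_prob Sg prob_given.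
Proof.
  destruct HP as [Hnn [H1 Hadd]]; unfold prob_given; split; [|split].
  - intros E HE; apply Rle_mult_inv_pos; auto.
    apply Hnn, sigma_inter; auto.
  - replace (inter full F) with F by (apply event_ext; unfold inter, full; tauto).
    field; lra.
  - intros E1 E2 HE1 HE2 Hd.
    replace (inter (union E1 E2) F) with (union (inter E1 F) (inter E2 F))
      by (apply event_ext; unfold inter, union; tauto).
    rewrite Hadd.
    + field; lra.
    + apply sigma_inter; auto.
    + apply sigma_inter; auto.
    + intros w [a _] [b _]; eauto.
Qed.

Lemma prob_given_ge E : Sg E -> P (inter E F) <= prob_given E.
Proof.
  intros HE; apply div_ge_self.
  - apply (prob_ge0 Sg P HP), sigma_inter; auto.
  - split; auto; apply (prob_le1 Sg HS P HP F HF).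
Qed.

Lemma prob_given_abs_cont : abs_cont Sg prob_given P.
Proof.
  intros En HEn Hcv e He.
  destruct (Hcv (e * P F)) as [N HN]; [apply Rmult_lt_0_compat; auto|].
  exists N; intros n Hn; specialize (HN n Hn); unfold R_dist in *.
  rewrite Rminus_0_r in *.
  assert (Hle : P (inter (En n) F) <= P (En n)).
  { apply (prob_mono Sg HS P HP); auto; [apply sigma_inter; auto|].
    intros w [a _]; auto. }
  assert (Hge : 0 <= P (inter (En n) F))
    by (apply (prob_ge0 Sg P HP), sigma_inter; auto).
  assert (Hq : prob_given (En n) * P F = P (inter (En n) F))
    by (unfold prob_given; field; lra).
  rewrite Rabs_pos_eq in HN by (apply (prob_ge0 Sg P HP); auto).
  rewrite Rabs_pos_eq by (apply prob_given_fa_prob; auto).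
  nra.
Qed.

Lemma cond_given_self w t :
  0 < prob_given (cyl w t) -> cond prob_given F w t = 1.
Proof.
  intros Hpos; unfold cond.
  replace (prob_given (inter F (cyl w t))) with (prob_given (cyl w t)).
  - field; lra.
  - unfold prob_given; f_equal; f_equal.
    apply event_ext; unfold inter; tauto.
Qed.

(* On the cylinder [w^s], [F] has conditional probability 1 under
   [P( . | F)], but loses the conditional mass of [w^s \ F] under [P]. *)
Lemma prob_given_bad_set (HC : contains_cylinders Sg) w s e :
  0 < prob_given (cyl w s) -> 0 < P (cyl w s) ->
  e < P (inter (cyl w s) (compl F)) -> bad_set Sg P prob_given e s w.
Proof.
  intros HQpos HPpos He.
  split; [exact HQpos|]; right; split; [exact HPpos|].
  exists F; split; auto.
  rewrite (cond_given_self w s HQpos); unfold cond.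
  replace (inter F (cyl w s)) with (inter (cyl w s) F)
    by (apply event_ext; unfold inter; tauto).
  pose proof (prob_split Sg HS P HP (cyl w s) F (HC _ _) HF) as Hsplit.
  pose proof (prob_le1 Sg HS P HP (cyl w s) (HC _ _)).
  pose proof (prob_ge0 Sg P HP _ (sigma_inter Sg HS _ _ (HC w s) HF)).
  pose proof (prob_ge0 Sg P HP _
                (sigma_inter Sg HS _ _ (HC w s) (sigma_compl Sg HS _ HF))).
  rewrite Hsplit in *.
  set (x := P (inter (cyl w s) F)) in *.
  set (y := P (inter (cyl w s) (compl F))) in *.
  replace (x / (x + y) - 1) with (- (y / (x + y))) by (field; lra).
  rewrite Rabs_Ropp, Rabs_pos_eq by (apply Rle_mult_inv_pos; lra).
  pose proof (div_ge_self y (x + y) ltac:(lra) ltac:(lra)); lra.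
Qed.

End Conditioning.

Lemma bad_set_determined Sg P Q e s : determined s (bad_set Sg P Q e s).
Proof.
  intros w w' Hw; unfold bad_set, cond; rewrite (cyl_eq _ _ _ Hw); auto.
Qed.

Lemma merges_far_path_small Sg (HS : is_sigma_algebra Sg)
  (HC : contains_cylinders Sg) P Q w t e d :
  merges Sg P Q -> fa_prob Sg Q -> 0 < e -> 0 < d ->
  (forall s, (t <= s)%nat -> bad_set Sg P Q e s w) ->
  exists s, (t <= s)%nat /\ Q (cyl w s) < d.
Proof.
  intros HM HQ He Hd Hbad.
  destruct (HM e He d Hd) as [N HN].
  exists (Nat.max N t); split; [lia|].
  set (s := Nat.max N t) in *.
  specialize (HN s (Nat.le_max_l _ _)); unfold R_dist in HN.
  rewrite Rminus_0_r in HN.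
  assert (Hsub : Q (cyl w s) <= Q (bad_set Sg P Q e s)).
  { apply (prob_mono Sg HS Q HQ); auto.
    - apply (sigma_determined Sg HS HC s), bad_set_determined.
    - intros w' Hw'.
      exact (bad_set_determined _ _ _ _ _ _ _ Hw' (Hbad s (Nat.le_max_r _ _))). }
  pose proof (Rle_abs (Q (bad_set Sg P Q e s))); lra.
Qed.

Lemma lower_bound_nearly_attained (u : nat -> R) a k :
  0 < a -> 1 < k -> (forall t, a <= u t) ->
  exists c, a <= c /\ (forall t, c <= u t) /\ exists t, u t < k * c.
Proof.
  intros Ha Hk Hu.
  destruct (completeness (fun x => exists t, x = - u t)) as [m [Hub Hlub]].
  { exists (- a); intros x [t ->]; specialize (Hu t); lra. }
  { exists (- u 0%nat); eauto. }
  assert (Hm : m <= - a) by (apply Hlub; intros x [t ->]; specialize (Hu t); lra).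
  exists (- m); split; [lra | split].
  - intro t; specialize (Hub _ (ex_intro _ t eq_refl)); lra.
  - apply NNPP; intro Hno.
    assert (m <= k * m).
    { apply Hlub; intros x [t ->].
      assert (~ u t < k * - m) by eauto; lra. }
    nra.
Qed.

Lemma cyl_halves_stay_heavy Sg (HS : is_sigma_algebra Sg)
  (HC : contains_cylinders Sg) P (HP : fa_prob Sg P) w t F c :
  Sg F -> (forall w', F w' -> cyl w t w') -> P F = 1/2 * P (cyl w t) ->
  (forall s, c <= P (cyl w s)) -> P (cyl w t) < 4/3 * c ->
  forall s, (t <= s)%nat ->
    c/3 <= P (inter (cyl w s) F) /\ c/3 <= P (inter (cyl w s) (compl F)).
Proof.
  intros HF HFt HPF Hinf Ht s Hs.
  assert (Hin : P (inter (cyl w s) F) <= P F).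
  { apply (prob_mono Sg HS P HP); [|apply sigma_inter|]; auto.
    intros w' [_ b]; auto. }
  assert (Hout : P (inter (cyl w s) (compl F)) <= P (inter (cyl w t) (compl F))).
  { apply (prob_mono Sg HS P HP).
    - apply sigma_inter, sigma_compl; auto.
    - apply sigma_inter, sigma_compl; auto.
    - intros w' [a b]; split; auto; eapply cyl_le; eauto. }
  pose proof (prob_split Sg HS P HP (cyl w t) F (HC _ _) HF) as Ht_split.
  replace (inter (cyl w t) F) with F in Ht_split
    by (apply event_ext; unfold inter; firstorder).
  pose proof (prob_split Sg HS P HP (cyl w s) F (HC _ _) HF).
  pose proof (Hinf s); lra.
Qed.

Lemma Delta_BD_cyl_small Sg (HS : is_sigma_algebra Sg)
  (HC : contains_cylinders Sg) P w eps :
  Delta_BD Sg P -> 0 < eps -> exists t, P (cyl w t) <= eps.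
Proof.
  intros [HPf [HPn HPb]] He; apply NNPP; intro Hno.
  assert (Hgt : forall t, eps <= P (cyl w t))
    by (intro t; apply Rlt_le, Rnot_le_lt; eauto).
  destruct (lower_bound_nearly_attained (fun t => P (cyl w t)) eps (4/3) He
              ltac:(lra) Hgt) as [c [Hc [Hinf [t Ht]]]].
  destruct (HPn (cyl w t) (1/2) (HC w t)) as [F [HF [HFt HPF]]]; [lra|].
  assert (HF0 : 0 < P F) by (pose proof (Hinf t); lra).
  assert (Hhalves := cyl_halves_stay_heavy Sg HS HC P HPf w t F c HF HFt HPF Hinf Ht).
  set (Q := prob_given P F).
  assert (HQs : forall s, (t <= s)%nat -> c/3 <= Q (cyl w s)).
  { intros s Hs; destruct (Hhalves s Hs) as [Hin _].
    eapply Rle_trans; [exact Hin|]; apply (prob_given_ge Sg HS P HPf); auto. }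
  assert (Hbad : forall s, (t <= s)%nat -> bad_set Sg P Q (c/6) s w).
  { intros s Hs; destruct (Hhalves s Hs) as [Hin Hout].
    assert (HQpos : 0 < Q (cyl w s)) by (pose proof (HQs s Hs); lra).
    apply (prob_given_bad_set Sg HS P HPf F HF HC); auto; [pose proof (Hgt s)|]; lra. }
  destruct (merges_far_path_small Sg HS HC P Q w t (c/6) (c/3)
              (HPb Q (prob_given_fa_prob Sg HS P HPf F HF HF0)
                 (prob_given_abs_cont Sg HS P HPf F HF HF0))
              (prob_given_fa_prob Sg HS P HPf F HF HF0)
              ltac:(lra) ltac:(lra) Hbad) as [s [Hs HQsmall]].
  pose proof (HQs s Hs); lra.
Qed.

Lemma zeta_meas_null z (A : (event -> R) -> Prop) :
  (forall p, In p z -> ~ A (fst p)) -> zeta_meas z A = 0.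
Proof.
  induction z as [|p z IH]; intros HA; simpl; auto.
  destruct excluded_middle_informative as [Hp|_].
  - exfalso; apply (HA p); simpl; auto.
  - rewrite IH; [lra|]; intros q Hq; apply HA; simpl; auto.
Qed.

Lemma le_list_max n l : In n l -> (n <= list_max l)%nat.
Proof.
  intros Hn; pose proof (proj1 (list_max_le l (list_max l)) (le_n _)) as Hall.
  rewrite Forall_forall in Hall; auto.
Qed.

Theorem theorem3 (Sigma : event -> Prop)
  (HS : is_sigma_algebra Sigma) (HC : contains_cylinders Sigma)
  (eps : R) (Heps : 0 < eps <= 1) :
  exists T : (event -> R) -> event,
    (forall P, Delta_BD Sigma P -> is_open (T P)) /\
    (forall P, Delta_BD Sigma P -> P (T P) <= eps) /\
    (forall z, fin_supp_prob Sigma z ->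
       exists w0 t0, forall w, cyl w0 t0 w ->
         zeta_meas z (fun P => Delta_BD Sigma P /\ ~ T P w) = 0).
Proof.
  set (w0 := fun _ : nat => false).
  set (depth := fun P : event -> R =>
         epsilon (inhabits 0%nat) (fun t => P (cyl w0 t) <= eps)).
  exists (fun P => cyl w0 (depth P)); split; [|split].
  - intros P _; apply cyl_open.
  - intros P HP; apply (epsilon_spec (inhabits 0%nat) (fun t => P (cyl w0 t) <= eps)).
    apply (Delta_BD_cyl_small Sigma HS HC); tauto.
  - intros z _; exists w0, (list_max (map (fun p => depth (fst p)) z)).
    intros w Hw; apply zeta_meas_null; intros p Hp [_ Hn]; apply Hn.
    eapply cyl_le; [|exact Hw].
    apply le_list_max, in_map_iff; eauto.
Qed.
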